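(* Let $p$ be an odd prime and $n,k$ positive integers. Then $\psi'(P^*(p^n,2^k))>\frac{19}{43}$ if and only if either ($p=3$, $n=1$, $k\ge1$) or ($p=5$, $n=1$, $k\le 2$).
   Context: For a finite group $G$, $\psi(G)=\sum_{x\in G} o(x)$ and $\psi'(G)=\psi(G)/\psi(\mathcal{C}_{|G|})$, where $\mathcal{C}_n$ is the cyclic group of order $n$. For an odd prime $p$ and positive integers $n,k$, $P^*(p^n,2^k)=A\rtimes\langle x\rangle$, where $A$ is elementary abelian of order $p^n$, $\langle x\rangle$ is cyclic of order $2^k$, and $x$ acts on $A$ by inversion. *)

From HB Require Import structures.
From mathcomp Require Import all_boot all_order all_algebra all_fingroup all_solvable.
Set Implicit Arguments. Unset Strict Implicit. Unset Printing Implicit Defensive.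
Import GRing.Theory Num.Theory.

Definition psi (gT : finGroupType) (G : {set gT}) : nat := \sum_(x in G) #[x]%g.

(* The cyclic group C_m of order m (for m >= 1) realised as Zp m inside 'Z_m. *)
Definition psi_cyclic (m : nat) : nat := psi (Zp m).

Definition psi' (gT : finGroupType) (G : {set gT}) : rat :=
  ((psi G)%:R / (psi_cyclic #|G|)%:R)%R.

From HB Require Import structures.
From mathcomp Require Import all_boot all_order all_algebra all_fingroup all_solvable zify.
Set Implicit Arguments. Unset Strict Implicit. Unset Printing Implicit Defensive.
Import GRing.Theory Num.Theory.

(* Every element of G = A ><| <[x]> is a * y with a in A and y in <[x]>.  The
   elements y of <[x ^+ 2]> centralise A and have 2-power order, so #[a * y] =
   #[a] * #[y]; the other elements of <[x]> invert A, so (a * y) ^+ 2 = y ^+ 2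
   and #[a * y] = #[x].  Hence psi G = psi A * psi(C_(2^(k-1))) + p^n 2^(2k-1),
   while psi of cyclic groups is multiplicative with
   (q + 1) * psi(C_(q^e)) = q^(2e+1) + 1 for q prime.  Comparing with 19/43 is
   then elementary arithmetic: for n >= 2 the ratio stays far below 19/43, and
   for n = 1 it exceeds 19/43 exactly when p = 3, or p = 5 and k <= 2; the
   bound is attained at p = 7, n = k = 1. *)

Lemma psi_isog (gT rT : finGroupType) (G : {group gT}) (H : {group rT}) :
  G \isog H -> psi G = psi H.
Proof.
case/isogP=> f injf <-; rewrite /psi morphimEdom big_imset /=; last exact/injmP.
by apply: eq_bigr => y Gy; rewrite (order_injm injf).
Qed.

Lemma cyclic_Zp m : cyclic (Zp m).
Proof. by rewrite /Zp; case: ifP => _; [rewrite Zp_cycle; exact: cycle_cyclic | exact: cyclic1]. Qed.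

Lemma psi_cycle (gT : finGroupType) (g : gT) : psi <[g]>%g = psi_cyclic #[g]%g.
Proof.
apply: psi_isog.
by rewrite isog_cyclic_card ?cycle_cyclic // cyclic_Zp card_Zp ?order_gt0 //= eqxx.
Qed.

Lemma psi_cyclic1 : psi_cyclic 1 = 1.
Proof. by rewrite /psi_cyclic /Zp /= /psi big_set1 order1. Qed.

Lemma big_mulg_TI (gT : finGroupType) (R : Type) (idx : R) (op : Monoid.com_law idx)
    (H K : {group gT}) (F : gT -> R) :
  H :&: K = 1%g ->
  \big[op/idx]_(g in (H * K)%g) F g = \big[op/idx]_(h in H) \big[op/idx]_(k in K) F (h * k)%g.
Proof.
move=> tiHK; have defHK := curry_imset2X (fun h k => h * k)%g H K.
rewrite [(H * K)%g]defHK big_imset /=.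
  by rewrite pair_big_dep; apply: eq_big => [[h k]|[h k] _]; rewrite ?in_setX.
by apply/imset_injP; rewrite -defHK cardsX TI_cardMg.
Qed.

Lemma psi_subset (gT : finGroupType) (H G : {set gT}) :
  H \subset G -> psi G = psi H + \sum_(y in G :\: H) #[y]%g.
Proof. by move=> sHG; rewrite /psi (big_setID H) /= (setIidPr sHG). Qed.

Lemma orderX_expS (gT : finGroupType) (g : gT) q e :
  0 < q -> #[g]%g = q ^ e.+1 -> #[g ^+ q]%g = q ^ e.
Proof. by move=> q_gt0 og; rewrite orderXdiv og expnS ?dvdn_mulr // mulKn. Qed.

Lemma order_cycle_setD (gT : finGroupType) (g y : gT) q e : prime q -> #[g]%g = q ^ e.+1 ->
  y \in <[g]>%g :\: <[g ^+ q]>%g -> #[y]%g = #[g]%g.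
Proof.
move=> q_pr og /setDP[/cycleP[i ->] /negP yNgq].
have q'i : coprime (q ^ e.+1) i.
  rewrite coprimeXl // prime_coprime //; apply/negP => /dvdnP[j def_i].
  by apply: yNgq; rewrite def_i mulnC expgM mem_cycle.
by rewrite orderXgcd og (eqP q'i) divn1.
Qed.

Lemma psi_cycle_pfactorS (gT : finGroupType) (g : gT) q e : prime q -> #[g]%g = q ^ e.+1 ->
  psi <[g]>%g = psi <[g ^+ q]>%g + (q ^ e.+1 - q ^ e) * q ^ e.+1.
Proof.
move=> q_pr og; have ogq := orderX_expS (prime_gt0 q_pr) og.
rewrite (psi_subset (cycleX g q)); congr (_ + _).
rewrite (eq_bigr (fun=> q ^ e.+1)) => [|y /(order_cycle_setD q_pr og)-> //].
by rewrite sum_nat_const cardsD (setIidPr (cycleX g q)) -!orderE og ogq.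
Qed.

Lemma elem_of_order m : 0 < m -> {g : 'I_m.-1.+1 | #[g]%g = m}.
Proof. by move=> m_gt0; exists Zp1; rewrite order_Zp1 prednK. Qed.

Lemma psi_cyclic_pfactorS q e : prime q ->
  psi_cyclic (q ^ e.+1) = psi_cyclic (q ^ e) + (q ^ e.+1 - q ^ e) * q ^ e.+1.
Proof.
move=> q_pr; have /elem_of_order[g og] : 0 < q ^ e.+1 by rewrite expn_gt0 prime_gt0.
by rewrite -{1}og -psi_cycle (psi_cycle_pfactorS q_pr og) psi_cycle (orderX_expS _ og) ?prime_gt0.
Qed.

Lemma psi_cyclic_pfactor q e : prime q -> (q + 1) * psi_cyclic (q ^ e) = q ^ (2 * e + 1) + 1.
Proof.
move=> q_pr; elim: e => [|e IHe]; first by rewrite psi_cyclic1 muln1 addn1.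
have q_gt0 := prime_gt0 q_pr.
rewrite psi_cyclic_pfactorS // mulnDr IHe (_ : 2 * e.+1 + 1 = (2 * e + 1).+2); last by lia.
rewrite !expnS (_ : 2 * e + 1 = (e + e).+1) ?expnS ?expnD; last by lia.
set t := q ^ e; have t_gt0 : 0 < t by rewrite expn_gt0 q_gt0.
have -> : q * t - t = (q - 1) * t by rewrite mulnBl mul1n.
clearbody t; case: q q_gt0 {q_pr IHe} => // r _; rewrite subSS subn0; nia.
Qed.

Lemma psi_cycleM (gT : finGroupType) (g : gT) a b : coprime a b -> #[g]%g = a * b ->
  psi <[g]>%g = psi_cyclic a * psi_cyclic b.
Proof.
move=> coab og; have: 0 < a * b by rewrite -og order_gt0.
rewrite muln_gt0 => /andP[a_gt0 b_gt0].
have oga : #[g ^+ b]%g = a by rewrite orderXdiv og ?dvdn_mull // mulnK.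
have ogb : #[g ^+ a]%g = b by rewrite orderXdiv og ?dvdn_mulr // mulKn.
have tiab : <[g ^+ b]>%g :&: <[g ^+ a]>%g = 1%g by rewrite coprime_TIg // -!orderE oga ogb.
have defg : (<[g ^+ b]> * <[g ^+ a]>)%g = <[g]>%g.
  by apply/eqP; rewrite eqEcard mul_subG ?cycleX //= TI_cardMg // -!orderE oga ogb og.
have -> : psi_cyclic a = psi <[g ^+ b]>%g by rewrite psi_cycle oga.
have -> : psi_cyclic b = psi <[g ^+ a]>%g by rewrite psi_cycle ogb.
rewrite /psi -defg big_mulg_TI // big_distrl /=; apply: eq_bigr => y gby.
rewrite big_distrr /=; apply: eq_bigr => z gaz; apply: orderM.
  by move: gby gaz => /cycleP[i ->] /cycleP[j ->]; apply/commuteX2/commuteX2.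
rewrite (coprime_dvdl (order_dvdG gby)) // (coprime_dvdr (order_dvdG gaz)) //.
by rewrite -!orderE oga ogb.
Qed.

Lemma psi_cyclicM a b : 0 < a -> 0 < b -> coprime a b ->
  psi_cyclic (a * b) = psi_cyclic a * psi_cyclic b.
Proof.
move=> a_gt0 b_gt0 coab; have /elem_of_order[g og] : 0 < a * b by rewrite muln_gt0 a_gt0.
by rewrite -og -psi_cycle (psi_cycleM coab og).
Qed.

Lemma psi_abelem (gT : finGroupType) p (A : {group gT}) :
  (p.-abelem A)%g -> psi A = 1 + (#|A| - 1) * p.
Proof.
move=> abelA; rewrite /psi (big_setD1 1%g) //= order1; congr (_ + _).
rewrite (eq_bigr (fun=> p)) => [|a /setD1P[ntA Aa]]; last exact: abelem_order_p abelA Aa ntA.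
by rewrite sum_nat_const (cardsD1 1%g A) group1 add1n subn1.
Qed.

Lemma expg2_mul_invert (gT : finGroupType) (a y : gT) :
  (a ^ y = a^-1)%g -> ((a * y) ^+ 2 = y ^+ 2)%g.
Proof.
move=> ay; have ayV : (a ^ y^-1 = a^-1)%g by rewrite -[LHS]invgK -conjVg -{1}ay conjgK.
by rewrite !expgS !expg0 !mulg1 -mulgA (mulgA y) (conjgCV y a) ayV !mulgA mulgV mul1g.
Qed.

Lemma order_mul_invert (gT : finGroupType) (a y : gT) k :
  (a ^ y = a^-1)%g -> #[y]%g = 2 ^ k.+1 -> (a * y != 1)%g -> #[a * y]%g = 2 ^ k.+1.
Proof.
move=> ay oy ay_nt; have := congr1 order (expg2_mul_invert ay); rewrite !orderXgcd oy.
have -> : 2 ^ k.+1 %/ gcdn (2 ^ k.+1) 2 = 2 ^ k.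
  by rewrite expnS (gcdn_idPr _) ?dvdn_mulr // mulKn.
have [o_odd|o_even] := boolP (odd #[a * y]%g).
  move: (o_odd); rewrite -coprimen2 => /eqP->; rewrite divn1 => oay.
  by move: o_odd ay_nt; rewrite oay oddX orbF => /eqP k0; rewrite -order_eq1 oay k0.
have two_dvd : 2 %| #[a * y]%g by rewrite dvdn2.
by rewrite (gcdn_idPr two_dvd) -{2}(divnK two_dvd) => ->; rewrite expnSr.
Qed.

Section PStar.

Variables (gT : finGroupType) (p k : nat) (A G : {group gT}) (x : gT).
Hypotheses (p_odd : odd p) (abelA : (p.-abelem A)%g) (ox : #[x]%g = 2 ^ k.+1).
Hypotheses (defG : (A ><| <[x]> = G)%g) (xinv : forall a, a \in A -> (a ^ x = a^-1)%g).

Lemma conjg_sqr_cycle a z : a \in A -> z \in <[x ^+ 2]>%g -> (a ^ z = a)%g.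
Proof.
move=> Aa /cycleP[j ->]; apply/conjg_fixP/commgP; apply: commuteX; apply/commgP/conjg_fixP.
by rewrite !expgS expg0 mulg1 conjgM (xinv Aa) conjVg (xinv Aa) invgK.
Qed.

Lemma conjg_cycle_setD a y : a \in A -> y \in <[x]>%g :\: <[x ^+ 2]>%g -> (a ^ y = a^-1)%g.
Proof.
move=> Aa /setDP[/cycleP[i ->]]; rewrite -(odd_double_half i) expgD -mul2n expgM.
case: (odd i) => /= [_ | ]; last by rewrite mul1g mem_cycle.
by rewrite expg1 conjgM xinv // conjVg conjg_sqr_cycle ?mem_cycle.
Qed.

Lemma sum_order_mul_sqr_cycle a : a \in A ->
  \sum_(y in <[x ^+ 2]>%g) #[a * y]%g = #[a]%g * psi_cyclic (2 ^ k).
Proof.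
move=> Aa; rewrite -(orderX_expS _ ox) // -psi_cycle /psi big_distrr /=.
apply: eq_bigr => y x2y; apply: orderM; first exact/commgP/conjg_fixP/conjg_sqr_cycle.
have [-> | nt_a] := eqVneq a 1%g; first by rewrite order1 coprime1n.
rewrite (abelem_order_p abelA Aa nt_a) (coprime_dvdr (order_dvdG x2y)) //.
by rewrite -orderE (orderX_expS _ ox) // coprimeXr ?coprimen2.
Qed.

Lemma sum_order_mul_cycle_setD a : a \in A ->
  \sum_(y in <[x]>%g :\: <[x ^+ 2]>%g) #[a * y]%g = 2 ^ k * 2 ^ k.+1.
Proof.
move=> Aa; have [_ _ _ tiAx] := sdprodP defG.
rewrite (eq_bigr (fun=> 2 ^ k.+1)) => [|y x_x2y].
  rewrite sum_nat_const cardsD (setIidPr (cycleX x 2)) -!orderE ox (orderX_expS _ ox) //.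
  by rewrite expnS mul2n -addnn addnK.
rewrite (@order_mul_invert _ a y k) ?(conjg_cycle_setD Aa) // ?(order_cycle_setD _ ox) //.
case/setDP: x_x2y => xy x2'y; apply/eqP => ay1.
have def_y : y = (a^-1)%g by rewrite -(mulKg a y) ay1 mulg1.
have /set1P y1 : y \in [1 gT]%g by rewrite -tiAx inE {1}def_y groupV Aa xy.
by move: x2'y; rewrite y1 group1.
Qed.

Lemma psi_Pstar : psi G = psi A * psi_cyclic (2 ^ k) + #|A| * (2 ^ k * 2 ^ k.+1).
Proof.
have [_ defAx _ tiAx] := sdprodP defG.
rewrite /psi -defAx big_mulg_TI // big_distrl -sum_nat_const -big_split /=.
apply: eq_bigr => a Aa; rewrite (big_setID <[x ^+ 2]>%g) /= (setIidPr (cycleX x 2)).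
by rewrite sum_order_mul_sqr_cycle // sum_order_mul_cycle_setD.
Qed.

End PStar.

Lemma Pstar_ratio_rank_ge2 p P a b c m : 3 <= p -> p * p <= P -> a <= p * P ->
  (p + 1) * b = p * P * P + 1 -> m + 1 = 3 * c ->
  43 * (a * c + P * m) <= 19 * (b * (c + m)).
Proof.
move=> p_ge3 pp_le_P a_le def_b m_c.
have ac_le := leq_mul a_le (leqnn c).
have Pm_le : P * m <= P * (3 * c) by rewrite leq_mul2l -m_c leq_addr orbT.
have cubic : 43 * (p + 3) * (p + 1) <= 57 * (p * p * p) by nia.
have b_ge : 43 * P * (p + 3) <= 57 * b.
  have p1_gt0 : 0 < p + 1 by rewrite addn1.
  rewrite -(leq_pmul2l p1_gt0); have := leq_mul cubic (leqnn P).
  by have := leq_mul pp_le_P (leqnn (p * P)); nia.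
have : 3 * c <= c + m by lia.
nia.
Qed.

Lemma Pstar_ratio_rank1 p a c m : odd p -> 3 <= p -> a + p = p * p + 1 ->
  m + 1 = 3 * c -> 2 <= m ->
  (19 * (a * (c + m)) < 43 * (a * c + p * m)) = (p == 3) || (p == 5) && (m <= 8).
Proof.
move=> p_odd p_ge3 def_a m_c m_ge2.
have [p3 | p_neq3] := eqVneq p 3.
  by move: def_a; rewrite p3 => def_a; rewrite (_ : a = 7) /=; lia.
have [p5 | p_neq5] := eqVneq p 5.
  by move: def_a; rewrite p5 => def_a; rewrite (_ : a = 21) /=; [apply/idP/idP; lia | lia].
have p_ge7 : 7 <= p by have := odd_double_half p; rewrite p_odd -addnn; lia.
apply/negbTE; rewrite -leqNgt.
have a_ge : 43 * p <= 7 * a by nia.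
have := leq_mul a_ge (leqnn m); nia.
Qed.

Lemma pow2_mul_pow2S_le8 k : (2 ^ k * 2 ^ k.+1 <= 8) = (k <= 1).
Proof.
case: k => [|[|k]] //=; rewrite !expnS; have : 0 < 2 ^ k by rewrite expn_gt0.
by move=> ?; apply/negbTE; rewrite -ltnNge; nia.
Qed.

Lemma Pstar_criterion p n k a b c m : prime p -> odd p -> 0 < n ->
  a = 1 + (p ^ n - 1) * p -> (p + 1) * b = p ^ (2 * n + 1) + 1 ->
  m = 2 ^ k * 2 ^ k.+1 -> 3 * c = 2 ^ (2 * k + 1) + 1 ->
  (19 * (b * (c + m)) < 43 * (a * c + p ^ n * m))
    = ((p == 3) && (n == 1)) || [&& p == 5, n == 1 & k <= 1].
Proof.
move=> p_pr p_odd n_gt0 def_a def_b def_m def_c.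
have p_ge3 : 3 <= p.
  by move: (prime_gt1 p_pr) p_odd; rewrite leq_eqVlt => /predU1P[<- | ].
have m_c : m + 1 = 3 * c.
  by rewrite def_c def_m -expnD; congr (2 ^ _ + 1); lia.
have P_gt0 : 0 < p ^ n by rewrite expn_gt0 prime_gt0.
have [n1 | n_neq1] := eqVneq n 1.
  rewrite n1 expn1 in def_a def_b *; rewrite !andbT -pow2_mul_pow2S_le8 -def_m.
  have a_p : a + p = p * p + 1.
    by rewrite def_a; case: (p) p_ge3 => // q _; rewrite subn1 /=; nia.
  have a_b : b = a.
    have p1_gt0 : 0 < p + 1 by rewrite addn1.
    apply/eqP; rewrite -(eqn_pmul2l p1_gt0); apply/eqP.
    by move: def_b; rewrite !expnS expn0 muln1 => ->; nia.
  have m_ge2 : 2 <= m by rewrite def_m expnS mulnCA leq_pmulr // muln_gt0 expn_gt0.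
  by rewrite a_b Pstar_ratio_rank1.
rewrite !andbF; apply/negbTE; rewrite -leqNgt; apply: (Pstar_ratio_rank_ge2 (p := p)) m_c => //.
- by rewrite mulnn leq_pexp2l ?prime_gt0 // ltn_neqAle eq_sym n_neq1.
- by rewrite def_a mulnBl mul1n mulnC; nia.
- by rewrite def_b; congr (_ + 1); rewrite addn1 expnS mul2n -addnn expnD mulnA.
Qed.

Lemma psi_gt0 (gT : finGroupType) (G : {group gT}) : 0 < psi G.
Proof. by rewrite /psi (big_setD1 1%g) //= order1. Qed.

Lemma ltr_nat_ratio (R : numFieldType) (a b c d : nat) : 0 < b -> 0 < d ->
  ((a%:R / b%:R : R) < c%:R / d%:R)%R = (a * d < b * c).
Proof.
move=> b_gt0 d_gt0; rewrite ltr_pdivlMr ?ltr0n // mulrAC ltr_pdivrMr ?ltr0n //.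
by rewrite -!natrM ltr_nat [c * _]mulnC.
Qed.

Theorem corollary3p10 (gT : finGroupType) (p n k : nat) (A G : {group gT}) (x : gT) :
  prime p -> odd p -> 0 < n -> 0 < k ->
  (p.-abelem A)%g -> #|A| = p ^ n ->
  #[x]%g = 2 ^ k ->
  (A ><| <[x]> = G)%g ->
  (forall a, a \in A -> (a ^ x = a^-1)%g) ->
  ((19%:R / 43%:R : rat) < psi' G)%R <->
  (((p == 3) && (n == 1)) || [&& p == 5, n == 1 & k <= 2]).
Proof.
move=> p_pr p_odd n_gt0 k_gt0 abelA cardA ox defG xinv.
case: k k_gt0 ox => [|k] k_gt0 ox; first by rewrite ltnn in k_gt0.
have cardG : #|G| = p ^ n * 2 ^ k.+1 by rewrite -(sdprod_card defG) cardA -orderE ox.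
have psi_cyclicG :
    psi_cyclic #|G| = psi_cyclic (p ^ n) * (psi_cyclic (2 ^ k) + 2 ^ k * 2 ^ k.+1).
  rewrite cardG psi_cyclicM ?expn_gt0 ?prime_gt0 ?coprimeXl ?coprimeXr ?coprimen2 //.
  by rewrite psi_cyclic_pfactorS // expnS mul2n -addnn addnK.
rewrite /psi' ltr_nat_ratio ?psi_gt0 // (psi_Pstar p_odd abelA ox defG xinv).
rewrite psi_cyclicG (psi_abelem abelA) cardA.
have psi_2k := psi_cyclic_pfactor k (isT : prime 2).
by rewrite (Pstar_criterion p_pr p_odd n_gt0 erefl (psi_cyclic_pfactor n p_pr) erefl psi_2k).
Qed.
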